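(* Let $k>0$ be real, let $M=\begin{bmatrix} k-1 & k-1 & k\\ 1&0&0\\ 0&1&0\end{bmatrix}$ and $N_0=\begin{bmatrix} k-1 & 2k & 2k\\ 2 & 1-k & 2\\ \frac{2}{k} & \frac{2}{k} & -\frac{1}{k}(k^2+k-2)\end{bmatrix}$. For integers $n\ge1$ put $\mathbf{J}_n=M^n$ and $\mathbf{j}_n=N_0M^n$. Then for every integer $n\ge1$: $$\left(\mathbf{j}_{n+1}\right)^2=\left(\mathbf{j}_1\right)^2\mathbf{J}_{2n},\qquad \mathbf{j}_{2n+1}=\mathbf{J}_n\,\mathbf{j}_{n+1}.$$ *)

From mathcomp Require Import all_boot all_order all_algebra.
From mathcomp Require Import reals.
Set Implicit Arguments. Unset Strict Implicit. Unset Printing Implicit Defensive.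
Import Order.TTheory GRing.Theory Num.Theory.
Local Open Scope ring_scope.

Definition Mmat (R : realType) (k : R) : 'M[R]_3 :=
  \matrix_(i < 3, j < 3)
    nth 0 (nth [::] [:: [:: k - 1; k - 1; k];
        [:: 1; 0; 0];
        [:: 0; 1; 0]] i) j.

Definition N0mat (R : realType) (k : R) : 'M[R]_3 :=
  \matrix_(i < 3, j < 3)
    nth 0 (nth [::] [:: [:: k - 1; 2 * k; 2 * k];
        [:: 2; 1 - k; 2];
        [:: 2 / k; 2 / k; - ((k ^+ 2 + k - 2) / k)]] i) j.

Definition Jn (R : realType) (k : R) (n : nat) : 'M[R]_3 := (Mmat k) ^+ n.
Definition jn (R : realType) (k : R) (n : nat) : 'M[R]_3 := N0mat k *m (Mmat k) ^+ n.

From mathcomp Require Import all_boot all_order all_algebra.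
From mathcomp Require Import reals.
From mathcomp Require Import ring.
Set Implicit Arguments. Unset Strict Implicit. Unset Printing Implicit Defensive.
Import Order.TTheory GRing.Theory Num.Theory.
Local Open Scope ring_scope.

(* The matrix N0 commutes with M (a nine-entry computation).  Hence j_n = N0 M^n
   and J_n = M^n live in the commutative subring generated by M and N0, where
   j_m j_n = N0^2 M^(m+n) and J_m j_n = j_(m+n); both identities follow. *)

Section CommutingPowers.

Variables (R : pzRingType) (a b : R).
Hypothesis ab_comm : GRing.comm a b.

Lemma commXr (m : nat) : GRing.comm (a ^+ m) b.
Proof. exact/commr_sym/commrX/commr_sym. Qed.

Lemma mulrX_comm (m n : nat) : (b * a ^+ m) * (b * a ^+ n) = b ^+ 2 * a ^+ (m + n).
Proof. by rewrite mulrA -(mulrA b) commXr mulrA -expr2 -mulrA -exprD. Qed.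

Lemma exprX_mulr_comm (m n : nat) : a ^+ m * (b * a ^+ n) = b * a ^+ (m + n).
Proof. by rewrite mulrA commXr -mulrA -exprD. Qed.

Lemma sqr_mulrXS_comm (n : nat) :
  (b * a ^+ n.+1) * (b * a ^+ n.+1) = (b * a ^+ 1) * (b * a ^+ 1) * a ^+ (2 * n).
Proof.
by rewrite !mulrX_comm -mulrA -exprD mul2n -addnn addnS addSn.
Qed.

End CommutingPowers.

Lemma Mmat_N0mat_comm (R : realType) (k : R) :
  k != 0 -> GRing.comm (Mmat k : 'M[R]_2.+1) (N0mat k).
Proof.
move=> k0; rewrite /GRing.comm -!mulmxE; apply/matrixP => i j.
rewrite !mxE !big_ord_recl big_ord0 !mxE /=.
case: i => [[|[|[|i]]] Hi] //; case: j => [[|[|[|j]]] Hj] //=;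
  rewrite ?big_ord0 /bump /=; field; exact: k0.
Qed.

Theorem mainTheorem6 (R : realType) (k : R) (hk : 0 < k) (n : nat) (hn : (1 <= n)%N) :
  (jn k n.+1) *m (jn k n.+1) = ((jn k 1) *m (jn k 1)) *m Jn k (2 * n)
  /\ jn k (2 * n).+1 = Jn k n *m jn k n.+1.
Proof.
have MN := Mmat_N0mat_comm (lt0r_neq0 hk).
rewrite /jn /Jn !mulmxE; split; first exact: sqr_mulrXS_comm MN n.
by rewrite (exprX_mulr_comm MN) addnS mul2n -addnn.
Qed.
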